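(* Let $x\in\mathscr{S}\cdot\mathcal{Y}$ with coefficient matrix $\mathbf{X}$ and let $\varrho=x-\mathcal{P}x$, where $\mathcal{P}$ is one of the two projections $\mathcal{P}_{\hat{\mathcal{Y}}\to\hat{\mathscr{S}}}$, $\mathcal{P}_{\hat{\mathscr{S}}\to\hat{\mathcal{Y}}}$ defined in the context (with reduced dimensions $1\le\hat q\le q$ and $2\le\hat s\le s$). Then $$\|\varrho\|_{\mathcal{S}\cdot\mathcal{Y}}\le\begin{cases}\Sigma_{\hat{\mathcal{Y}}\to\hat{\mathcal{S}}}&\text{if }\mathcal{P}=\mathcal{P}_{\hat{\mathcal{Y}}\to\hat{\mathscr{S}}},\\ \Sigma_{\hat{\mathcal{S}}\to\hat{\mathcal{Y}}}&\text{if }\mathcal{P}=\mathcal{P}_{\hat{\mathscr{S}}\to\hat{\mathcal{Y}}},\end{cases}$$ where $$\Sigma_{\hat{\mathcal{Y}}\to\hat{\mathcal{S}}}=\Big(\sum_{i=\hat q+1}^q\sigma_i^2\Big)^{1/2}+\Big(\sum_{j=\hat s}^s\mathring\sigma_j^2\Big)^{1/2},\qquad \Sigma_{\hat{\mathcal{S}}\to\hat{\mathcal{Y}}}=\Big(\sum_{j=\hat s}^s\underline{\mathring\sigma}_j^2\Big)^{1/2}+\Big(\sum_{i=\hat q+1}^q\underline\sigma_i^2\Big)^{1/2},$$ with $\sigma_i$ the singular values of $\mathbf{L}_{\mathcal{Y}}^T\mathbf{X}\mathbf{L}_{\mathcal{S}}$, $\mathring\sigma_j$ those of $\mathbf{L}_{\mathcal{Y}}^T\mathring{\mathbf{X}}_{\mathscr{S}\cdot\hat{\mathcal{Y}}}\mathbf{L}_{\mathcal{S}}$,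 $\underline{\mathring\sigma}_j$ those of $\mathbf{L}_{\mathcal{Y}}^T\mathring{\mathbf{X}}\mathbf{L}_{\mathcal{S}}$, and $\underline\sigma_i$ those of $\mathbf{L}_{\mathcal{Y}}^T\mathbf{X}_{\hat{\mathscr{S}}\cdot\mathcal{Y}}\mathbf{L}_{\mathcal{S}}$.
   Context: Setting: $T>0$, $\Omega\subset\mathbb{R}^d$ bounded domain, $\mathcal{S}=\mathrm{span}\{\psi_1,\ldots,\psi_s\}\subset L^2(0,T)$ a nodal basis with $\psi_1$ the nodal function at $t=0$ ($\psi_1(0)=1$, $\psi_j(0)=0$ for $j\ge2$), $\mathcal{Y}=\mathrm{span}\{\nu_1,\ldots,\nu_q\}\subset L^2(\Omega)$. $\mathcal{S}\cdot\mathcal{Y}$ is the span of $\psi_j\nu_i$; $x=\sum_{i,j}\mathbf{x}_{i,j}\nu_i\psi_j$ has coefficient matrix $[\mathbf{x}_{i,j}]\in\mathbb{R}^{q\times s}$; all coefficient matrices below are taken with respect to this full basis. Inner product $(x_1,x_2)_{\mathcal{S}\cdot\mathcal{Y}}=\int_0^T\int_\Omega x_1x_2$ and induced norm; for a subspace $\mathcal{Z}\subseteq\mathcal{S}\cdot\mathcal{Y}$, $\Pi_{\mathcal{Z}}$ is the orthogonal projection onto $\mathcal{Z}$ in this inner product. Gramians $\mathbf{M}_{\mathcal{S}}=[(\psi_i,\psi_j)_{L^2(0,T)}]=\mathbf{L}_{\mathcal{S}}\mathbf{L}_{\mathcal{S}}^T$ with $\mathbf{L}_{\mathcal{S}}$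 invertible upper triangular, $\mathbf{M}_{\mathcal{Y}}=[(\nu_i,\nu_j)_{L^2(\Omega)}]=\mathbf{L}_{\mathcal{Y}}\mathbf{L}_{\mathcal{Y}}^T$. $\Pi_{\mathcal{Y}}$ is the $L^2(\Omega)$-projection onto $\mathcal{Y}$, $x_0$ a given initial value, and $\mathscr{S}\cdot\mathcal{Y}=\{x\in\mathcal{S}\cdot\mathcal{Y}:x(0)=\Pi_{\mathcal{Y}}x_0\}$. For a matrix $\mathbf{Z}$, $\mathring{\mathbf{Z}}$ denotes $\mathbf{Z}$ with first column set to zero. Reduced space basis from $\mathbf{Z}\in\mathbb{R}^{q\times s}$: $V_{\hat q}$ = matrix of the $\hat q$ leading left singular vectors of $\mathbf{L}_{\mathcal{Y}}^T\mathbf{Z}\mathbf{L}_{\mathcal{S}}$, $[\hat\nu_1,\ldots,\hat\nu_{\hat q}]^T=V_{\hat q}^T\mathbf{L}_{\mathcal{Y}}^{-1}[\nu_1,\ldots,\nu_q]^T$, $\hat{\mathcal{Y}}=\mathrm{span}\{\hat\nu_i\}$. Reduced time basis (incorporating the initial condition) from $\mathbf{Z}$: $\mathring U_{\hat s-1}$ = the $\hat s-1$ leading right singular vectors of $\mathbf{L}_{\mathcal{Y}}^T\mathring{\mathbf{Z}}\mathbf{L}_{\mathcal{S}}$, $U_{\hat s}=[(\mathbf{L}_{\mathcal{S}}^T)_{:,1}\;\mathring U_{\hat s-1}]$ (first column of $\mathbf{L}_{\mathcal{S}}^T$ prepended), $[\hat\psi_1,\ldots,\hat\psi_{\hat s}]^T=U_{\hat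 s}^T\mathbf{L}_{\mathcal{S}}^{-1}[\psi_1,\ldots,\psi_s]^T$, $\hat{\mathcal{S}}=\mathrm{span}\{\hat\psi_j\}$; the symbol $\hat{\mathscr{S}}$ indicates this construction and that functions satisfy the initial condition $\cdot(0)=\Pi_{\mathcal{Y}}x_0$. Products $\mathcal{S}\cdot\hat{\mathcal{Y}}$, $\hat{\mathcal{S}}\cdot\mathcal{Y}$, $\hat{\mathcal{S}}\cdot\hat{\mathcal{Y}}$ are spans of the corresponding products of basis functions. Projection $\mathcal{P}_{\hat{\mathcal{Y}}\to\hat{\mathscr{S}}}$: build $\hat{\mathcal{Y}}$ from $\mathbf{X}$; let $\mathbf{X}_{\mathscr{S}\cdot\hat{\mathcal{Y}}}$ be the coefficient matrix of $\Pi_{\mathcal{S}\cdot\hat{\mathcal{Y}}}x$; build $\hat{\mathcal{S}}$ from $\mathbf{X}_{\mathscr{S}\cdot\hat{\mathcal{Y}}}$; set $\mathcal{P}_{\hat{\mathcal{Y}}\to\hat{\mathscr{S}}}x=\Pi_{\hat{\mathcal{S}}\cdot\hat{\mathcal{Y}}}\Pi_{\mathcal{S}\cdot\hat{\mathcal{Y}}}x$. Projection $\mathcal{P}_{\hat{\mathscr{S}}\to\hat{\mathcal{Y}}}$: build $\hat{\mathcal{S}}$ from $\mathbf{X}$; let $\mathbf{X}_{\hat{\mathscr{S}}\cdot\mathcal{Y}}$ be the coefficient matrix of $\Pi_{\hat{\mathcal{S}}\cdot\mathcal{Y}}x$; build $\hat{\mathcal{Y}}$ from $\mathbf{X}_{\hat{\mathscr{S}}\cdot\mathcal{Y}}$;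 set $\mathcal{P}_{\hat{\mathscr{S}}\to\hat{\mathcal{Y}}}x=\Pi_{\hat{\mathcal{S}}\cdot\hat{\mathcal{Y}}}\Pi_{\hat{\mathcal{S}}\cdot\mathcal{Y}}x$. Singular values are ordered nonincreasingly and taken to be $0$ for indices exceeding $\min(q,s)$. *)

(* Space-time functions x in S.Y are represented by their
   coefficient matrices X : 'M[R]_(q,s) w.r.t. the basis nu_i psi_j
   (X i j = coefficient of nu_i psi_j, 0-based indices; psi_1 of the paper is
   column 0).  The L^2 Gramians are M_Y = L_Y L_Y^T and M_S = L_S L_S^T. *)
From mathcomp Require Import all_boot all_order all_algebra.
From mathcomp Require Import reals.
Set Implicit Arguments. Unset Strict Implicit. Unset Printing Implicit Defensive.
Import Order.TTheory GRing.Theory Num.Theory.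
Local Open Scope ring_scope.

Section Defs.
Variable R : realType.

(* (x1,x2)_{S.Y} = int_0^T int_Omega x1 x2
                 = sum X1_ij X2_kl (nu_i,nu_k)(psi_j,psi_l)
                 = tr(X1^T M_Y X2 M_S). *)
Definition sy_inner q s (LY : 'M[R]_q) (LS : 'M[R]_s) (X1 X2 : 'M[R]_(q, s)) : R :=
  \tr (X1^T *m (LY *m LY^T) *m X2 *m (LS *m LS^T)).

Definition sy_norm q s (LY : 'M[R]_q) (LS : 'M[R]_s) (X : 'M[R]_(q, s)) : R :=
  Num.sqrt (sy_inner LY LS X X).

Definition is_orth_proj q s (LY : 'M[R]_q) (LS : 'M[R]_s)
  (Z : 'M[R]_(q, s) -> Prop) (X P : 'M[R]_(q, s)) : Prop :=
  Z P /\ forall Y, Z Y -> sy_inner LY LS (X - P) Y = 0.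

Definition zero_first q s (Z : 'M[R]_(q, s)) : 'M[R]_(q, s) :=
  \matrix_(i, j) if (nat_of_ord j == 0)%N then 0 else Z i j.

Definition rect_diag q s (sv : nat -> R) : 'M[R]_(q, s) :=
  \matrix_(i, j) if (nat_of_ord i == nat_of_ord j) then sv (nat_of_ord i) else 0.

Definition is_svd q s (A : 'M[R]_(q, s)) (U : 'M[R]_q) (sv : nat -> R)
  (V : 'M[R]_s) : Prop :=
  [/\ U^T *m U = 1%:M /\ V^T *m V = 1%:M,
      (forall k, 0 <= sv k),
      (forall k l, (k <= l)%N -> sv l <= sv k),
      (forall k, (minn q s <= k)%N -> sv k = 0)
    & A = U *m rect_diag q s sv *m V^T].

Definition ordpred n (j : 'I_n) : 'I_n :=
  Ordinal (leq_ltn_trans (leq_pred j) (ltn_ord j)).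

(* s x s matrix whose column 0 is the first column of L_S^T and whose
   column j >= 1 is the j-th right singular vector V_{:,j-1};
   its first sh columns are U_sh = [(L_S^T)_{:,1}  \ring U_{sh-1}]. *)
Definition time_basis s (LS V : 'M[R]_s) : 'M[R]_s :=
  \matrix_(i, j) if (nat_of_ord j == 0)%N then LS^T i j else V i (ordpred j).

(* coefficient vectors (as columns) of the reduced space basis
   [nu^_1..] = W^T L_Y^{-1} [nu_1..], i.e. columns of L_Y^{-T} W *)
Definition space_coef q (LY W : 'M[R]_q) : 'M[R]_q := (invmx LY)^T *m W.
(* coefficient vectors of [psi^_1..] = U^T L_S^{-1} [psi_1..] *)
Definition time_coef s (LS U : 'M[R]_s) : 'M[R]_s := (invmx LS)^T *m U.

(* span of the products a_k b_l (k < qh, l < sh), where the columns of A (resp.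
   B) are coefficient vectors of the space (resp. time) functions. *)
Definition span_prod q s (A : 'M[R]_q) (B : 'M[R]_s) (qh sh : nat)
  (X : 'M[R]_(q, s)) : Prop :=
  exists C : 'M[R]_(q, s),
    (forall i j, (qh <= nat_of_ord i)%N || (sh <= nat_of_ord j)%N -> C i j = 0)
    /\ X = A *m C *m B^T.

(* sum_{k = a}^{n-1} sv_k^2  (0-based) *)
Definition tail_sq (sv : nat -> R) (a n : nat) : R :=
  \sum_(a <= k < n) sv k ^+ 2.

End Defs.

(* Let x1 be the intermediate projection (onto Ŷ·S, resp. Ŝ·Y) and P x the final
   one. The final subspace lies in the intermediate one, so x - x1 is orthogonal to
   x1 - P x and ||x - P x|| <= ||x - x1|| + ||x1 - P x||; each projection error is in
   turn at most the error of any competitor from the same subspace. Whitening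
   X |-> L_Y^T X L_S turns the space-time inner product into the Frobenius one, in
   which the reduced bases are singular vectors, so truncated SVDs are admissible
   competitors: W_k W_k^T A for the reduced space, and for the reduced time basis the
   first column (reproduced by psi_1) plus the rank-k right truncation of the other
   columns. Their Frobenius errors are exactly the singular value tails. *)

From mathcomp Require Import all_boot all_order all_algebra.
From mathcomp Require Import reals.
Set Implicit Arguments. Unset Strict Implicit. Unset Printing Implicit Defensive.
Import Order.TTheory GRing.Theory Num.Theory.
Local Open Scope ring_scope.

Lemma sqrtrD_le (R : rcfType) (a b : R) : 0 <= a -> 0 <= b ->
  Num.sqrt (a + b) <= Num.sqrt a + Num.sqrt b.
Proof.
move=> a_ge0 b_ge0.
rewrite -(ger0_norm (addr_ge0 (sqrtr_ge0 a) (sqrtr_ge0 b))) -sqrtr_sqr.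
apply: ler_wsqrtr; rewrite sqrrD !sqr_sqrtr // addrAC lerDl.
by rewrite mulrn_wge0 // mulr_ge0 ?sqrtr_ge0.
Qed.

Section PartialIdentity.
Variable R : pzRingType.

Lemma pid_mx_diag n r : pid_mx r = diag_mx (\row_(j < n) (j < r)%:R) :> 'M[R]_n.
Proof.
by apply/matrixP => i j; rewrite !mxE val_eqE; case: (i == j); rewrite /= ?mulr1n ?mulr0n.
Qed.

Lemma pid_mx_idem n r : pid_mx r *m (pid_mx r : 'M_n) = pid_mx r :> 'M[R]_n.
Proof. by rewrite mul_pid_mx minnn pid_mx_minv. Qed.

Lemma mul_mx_pidE m n r (A : 'M[R]_(m, n)) i j :
  (A *m pid_mx r) i j = if (j < r)%N then A i j else 0.
Proof. by rewrite pid_mx_diag mul_mx_diag !mxE; case: ltnP; rewrite ?mulr1 ?mulr0. Qed.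

Lemma mul_pid_mxE m n r (A : 'M[R]_(m, n)) i j :
  (pid_mx r *m A) i j = if (i < r)%N then A i j else 0.
Proof. by rewrite pid_mx_diag mul_diag_mx !mxE; case: ltnP; rewrite ?mul1r ?mul0r. Qed.

End PartialIdentity.

Section Frobenius.
Variable R : comPzRingType.

Definition frob2 m n (A : 'M[R]_(m, n)) : R := \tr (A^T *m A).

Lemma frob2E m n (A : 'M[R]_(m, n)) : frob2 A = \sum_i \sum_j A i j ^+ 2.
Proof.
rewrite /frob2 /mxtrace exchange_big; apply: eq_bigr => j _; rewrite mxE.
by apply: eq_bigr => i _; rewrite mxE expr2.
Qed.

Lemma frob2_tr m n (A : 'M[R]_(m, n)) : frob2 A^T = frob2 A.
Proof. by rewrite /frob2 trmxK mxtrace_mulC. Qed.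

Lemma frob2_orthogonal m n (U : 'M[R]_m) (V : 'M[R]_n) (M : 'M[R]_(m, n)) :
  U^T *m U = 1%:M -> V^T *m V = 1%:M -> frob2 (U *m M *m V^T) = frob2 M.
Proof.
move=> UU VV; rewrite /frob2 !trmx_mul trmxK !mulmxA -(mulmxA _ U^T) UU mulmx1.
by rewrite mxtrace_mulC !mulmxA VV mul1mx.
Qed.

End Frobenius.

Lemma frob2_ge0 (R : realDomainType) m n (A : 'M[R]_(m, n)) : 0 <= frob2 A.
Proof. by rewrite frob2E; do 2!apply: sumr_ge0 => ? _; apply: sqr_ge0. Qed.

Section TruncatedSVD.
Variable R : realType.
Implicit Types sv : nat -> R.

Lemma tr_rect_diag m n sv : (rect_diag m n sv)^T = rect_diag n m sv.
Proof. by apply/matrixP => i j; rewrite !mxE eq_sym; case: eqP => // ->. Qed.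

Lemma frob2_rect_diag m n sv : (forall k, (minn m n <= k)%N -> sv k = 0) ->
  frob2 (rect_diag m n sv) = \sum_(j < n) sv j ^+ 2.
Proof.
move=> sv0; rewrite frob2E exchange_big; apply: eq_bigr => j _.
have [j_lt_m | m_le_j] := ltnP j m.
  rewrite (bigD1 (Ordinal j_lt_m)) //= mxE eqxx big1 ?addr0 // => i ne_ij.
  rewrite mxE; case: eqP => [eq_ij|_]; last by rewrite expr0n.
  by case/eqP: ne_ij; apply: val_inj.
rewrite sv0 ?geq_min ?m_le_j // expr0n big1 // => i _.
by rewrite mxE (ltn_eqF (leq_trans (ltn_ord i) m_le_j)) expr0n.
Qed.

Lemma rect_diag_copid m n k sv :
  rect_diag m n sv *m copid_mx k
  = rect_diag m n (fun j => if (k <= j)%N then sv j else 0).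
Proof.
apply/matrixP => i j; rewrite mulmxBr mulmx1 mxE [X in _ + X]mxE mul_mx_pidE !mxE.
by case: eqP => [->|_]; case: leqP; rewrite ?subrr ?subr0.
Qed.

Lemma copid_rect_diag m n k sv :
  copid_mx k *m rect_diag m n sv
  = rect_diag m n (fun j => if (k <= j)%N then sv j else 0).
Proof.
apply/matrixP => i j; rewrite mulmxBl mul1mx mxE [X in _ + X]mxE mul_pid_mxE !mxE.
by case: eqP => [->|_]; case: leqP; rewrite ?subrr ?subr0.
Qed.

Lemma tail_sqE sv k n :
  \sum_(j < n) (if (k <= j)%N then sv j else 0) ^+ 2 = tail_sq sv k n.
Proof.
rewrite /tail_sq big_geq_mkord [RHS]big_mkcond /=.
by apply: eq_bigr => j _; case: ifP; rewrite ?expr0n.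
Qed.

Lemma svd_tail_right q s (A : 'M[R]_(q, s)) U sv V k : is_svd A U sv V ->
  frob2 (A - A *m V *m pid_mx k *m V^T) = tail_sq sv k s.
Proof.
case=> [[UU VV] _ _ sv0 ->].
have -> : U *m rect_diag q s sv *m V^T
          - U *m rect_diag q s sv *m V^T *m V *m pid_mx k *m V^T
    = U *m (rect_diag q s sv *m copid_mx k) *m V^T.
  by rewrite -(mulmxA _ V^T) VV mulmx1 /copid_mx mulmxBr mulmx1 mulmxBr mulmxBl !mulmxA.
rewrite frob2_orthogonal // rect_diag_copid frob2_rect_diag ?tail_sqE // => j j_ge.
by rewrite sv0 ?if_same.
Qed.

Lemma svd_tail_left q s (A : 'M[R]_(q, s)) U sv V k : is_svd A U sv V ->
  frob2 (A - U *m pid_mx k *m U^T *m A) = tail_sq sv k q.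
Proof.
case=> [[UU VV] _ _ sv0 ->].
have -> : U *m rect_diag q s sv *m V^T
          - U *m pid_mx k *m U^T *m (U *m rect_diag q s sv *m V^T)
    = U *m (copid_mx k *m rect_diag q s sv) *m V^T.
  by rewrite /copid_mx !mulmxA -(mulmxA _ U^T) UU mulmx1 mulmxBr mulmx1 !mulmxBl.
rewrite frob2_orthogonal // copid_rect_diag -frob2_tr tr_rect_diag.
rewrite frob2_rect_diag ?tail_sqE // => j j_ge.
by rewrite sv0 ?if_same // minnC.
Qed.

End TruncatedSVD.

Section SpaceTimeInner.
Variables (R : realType) (q s : nat) (LY : 'M[R]_q) (LS : 'M[R]_s).
Notation inner := (sy_inner LY LS).
Implicit Types X Y P : 'M[R]_(q, s).

Lemma sy_inner_whiten X Y :
  inner X Y = \tr ((LY^T *m X *m LS)^T *m (LY^T *m Y *m LS)).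
Proof.
rewrite /sy_inner !trmx_mul !trmxK mxtrace_mulC !mulmxA.
by rewrite -!mulmxA mxtrace_mulC !mulmxA.
Qed.

Lemma sy_inner_self X : inner X X = frob2 (LY^T *m X *m LS).
Proof. exact: sy_inner_whiten. Qed.

Lemma sy_inner_ge0 X : 0 <= inner X X.
Proof. by rewrite sy_inner_self frob2_ge0. Qed.

Lemma sy_innerC X Y : inner X Y = inner Y X.
Proof. by rewrite !sy_inner_whiten -mxtrace_tr trmx_mul trmxK. Qed.

Lemma sy_innerDr X Y1 Y2 : inner X (Y1 + Y2) = inner X Y1 + inner X Y2.
Proof. by rewrite /sy_inner mulmxDr mulmxDl mxtraceD. Qed.

Lemma sy_innerDl X1 X2 Y : inner (X1 + X2) Y = inner X1 Y + inner X2 Y.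
Proof. by rewrite sy_innerC sy_innerDr !(sy_innerC Y). Qed.

Lemma sy_inner_pythagoras X Y : inner X Y = 0 ->
  inner (X + Y) (X + Y) = inner X X + inner Y Y.
Proof.
move=> XY0; rewrite sy_innerDl !sy_innerDr XY0 sy_innerC XY0.
by rewrite addr0 add0r.
Qed.

Section BestApproximation.
Variable Z : 'M[R]_(q, s) -> Prop.
Hypothesis Z_subr : forall X Y, Z X -> Z Y -> Z (X - Y).

Lemma orth_proj_err_le X P Y : is_orth_proj LY LS Z X P -> Z Y ->
  inner (X - P) (X - P) <= inner (X - Y) (X - Y).
Proof.
case=> ZP XP_orth ZY.
have -> : X - Y = (X - P) + (P - Y) by rewrite addrA subrK.
by rewrite (sy_inner_pythagoras (XP_orth _ (Z_subr ZP ZY))) lerDl sy_inner_ge0.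
Qed.

End BestApproximation.

Lemma two_step_orth_proj_err_le (Z1 Z : 'M[R]_(q, s) -> Prop) X X1 P t1 t2 :
  (forall X Y, Z1 X -> Z1 Y -> Z1 (X - Y)) ->
  (forall X Y, Z X -> Z Y -> Z (X - Y)) ->
  (forall X, Z X -> Z1 X) ->
  is_orth_proj LY LS Z1 X X1 -> is_orth_proj LY LS Z X1 P ->
  (exists2 Y, Z1 Y & inner (X - Y) (X - Y) = t1) ->
  (exists2 Y, Z Y & inner (X1 - Y) (X1 - Y) = t2) ->
  sy_norm LY LS (X - P) <= Num.sqrt t1 + Num.sqrt t2.
Proof.
move=> Z1_subr Z_subr Z_Z1 projX projX1 [Y1 Z1Y1 <-] [Y ZY <-].
have err1 := orth_proj_err_le Z1_subr projX Z1Y1.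
have err2 := orth_proj_err_le Z_subr projX1 ZY.
have -> : X - P = (X - X1) + (X1 - P) by rewrite addrA subrK.
have [Z1X1 XX1_orth] := projX; have [ZP _] := projX1.
rewrite /sy_norm (sy_inner_pythagoras (XX1_orth _ (Z1_subr _ _ Z1X1 (Z_Z1 _ ZP)))).
apply: le_trans (sqrtrD_le (sy_inner_ge0 _) (sy_inner_ge0 _)).
by rewrite ler_wsqrtr // lerD.
Qed.

End SpaceTimeInner.

Section SpanProd.
Variables (R : realType) (q s : nat).
Implicit Types (X : 'M[R]_(q, s)) (A : 'M[R]_q) (B : 'M[R]_s).

Lemma span_prodP A B qh sh X :
  span_prod A B qh sh X <->
  exists C : 'M[R]_(q, s), X = A *m (pid_mx qh *m C *m pid_mx sh) *m B^T.
Proof.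
split=> [[C [C0 ->]] | [C ->]]; last exists (pid_mx qh *m C *m pid_mx sh).
  exists C; congr (_ *m _ *m _); apply/matrixP => i j.
  rewrite mul_mx_pidE mul_pid_mxE.
  by case: (ltnP j sh) => hj; case: (ltnP i qh) => hi //; rewrite C0 // ?hi ?hj ?orbT.
split=> // i j; rewrite mul_mx_pidE mul_pid_mxE.
by case/orP; rewrite leqNgt => /negPf ->; rewrite ?if_same.
Qed.

Lemma span_prodB A B qh sh X Y :
  span_prod A B qh sh X -> span_prod A B qh sh Y -> span_prod A B qh sh (X - Y).
Proof.
move=> /span_prodP[C ->] /span_prodP[D ->]; apply/span_prodP; exists (C - D).
by rewrite mulmxBr mulmxBl mulmxBr mulmxBl.
Qed.

Lemma span_prod_full X : span_prod 1%:M 1%:M q s X.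
Proof. by apply/span_prodP; exists X; rewrite !pid_mx_1 trmx1 !mulmx1 !mul1mx. Qed.

Lemma span_prod_widen_time A B qh sh X :
  span_prod A B qh sh X -> span_prod A 1%:M qh s X.
Proof.
move=> /span_prodP[C ->]; apply/span_prodP.
exists (C *m pid_mx sh *m B^T).
by rewrite pid_mx_1 trmx1 !mulmx1 !mulmxA.
Qed.

Lemma span_prod_widen_space A B qh sh X :
  span_prod A B qh sh X -> span_prod 1%:M B q sh X.
Proof.
move=> /span_prodP[C ->]; apply/span_prodP.
exists (A *m pid_mx qh *m C).
by rewrite pid_mx_1 !mul1mx !mulmxA.
Qed.

End SpanProd.

Section Shift.
Variable R : pzRingType.

Definition shift_mx n : 'M[R]_n := \matrix_(i, j) (i.+1 == j :> nat)%:R.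

Lemma shift_mx_pid n k : shift_mx n *m pid_mx k.+1 = pid_mx k *m shift_mx n.
Proof.
apply/matrixP => i j; rewrite mul_mx_pidE mul_pid_mxE !mxE.
by case: eqP => [<-|_]; rewrite ?ltnS ?if_same.
Qed.

Lemma shift_mx_pid1 n : shift_mx n *m pid_mx 1 = 0 :> 'M[R]_n.
Proof. by rewrite shift_mx_pid pid_mx_0 mul0mx. Qed.

Lemma shift_mx_mul_tr n : shift_mx n *m (shift_mx n)^T = pid_mx n.-1.
Proof.
apply/matrixP => i j; rewrite !mxE ltn_predRL.
have [i1_lt_n | n_le_i1] := ltnP i.+1 n; last first.
  rewrite andbF big1 // => l _; rewrite !mxE; case: eqP => [e | _]; last by rewrite mul0r.
  by move: (ltn_ord l); rewrite -e ltnNge n_le_i1.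
rewrite (bigD1 (Ordinal i1_lt_n)) //= !mxE eqxx mul1r big1 ?addr0 => [|l ne_l].
  by rewrite eqSS eq_sym andbT.
rewrite !mxE; case: eqP => [e | _]; last by rewrite mul0r.
by case/eqP: ne_l; apply: val_inj.
Qed.

End Shift.

Arguments shift_mx {R} n.

Section TimeBasis.
Variables (R : realType) (s : nat).
Implicit Types LS V : 'M[R]_s.

Lemma time_basisE LS V : time_basis LS V = LS^T *m pid_mx 1 + V *m shift_mx s.
Proof.
apply/matrixP => i j; rewrite /time_basis mxE [RHS]mxE mul_mx_pidE.
case: eqP => [j0 | /eqP j_neq0].
  by rewrite j0 /= [(V *m _) _ _]mxE big1 ?addr0 // => l _; rewrite !mxE j0 mulr0.
rewrite ltnS leqn0 (negPf j_neq0) add0r mxE (bigD1 (ordpred j)) //= !mxE /=.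
rewrite prednK ?lt0n // eqxx mulr1.
rewrite big1 ?addr0 // => l ne_l; rewrite !mxE.
case: eqP => [e | _]; last by rewrite mulr0.
by case/eqP: ne_l; apply: val_inj; rewrite /= -e.
Qed.

Lemma time_basis_coef LS V m k (C H : 'M[R]_(m, s)) : (k < s)%N ->
  (C *m pid_mx 1 + H *m pid_mx k *m shift_mx s) *m (time_basis LS V)^T
  = C *m pid_mx 1 *m LS + H *m pid_mx k *m V^T.
Proof.
move=> k_lt_s.
have P1ShT : pid_mx 1 *m (shift_mx s)^T = 0 :> 'M[R]_s.
  by rewrite -[LHS]trmxK trmx_mul trmxK tr_pid_mx shift_mx_pid1 trmx0.
have PkShShT : pid_mx k *m shift_mx s *m (shift_mx s)^T = pid_mx k :> 'M[R]_s.
  rewrite -mulmxA shift_mx_mul_tr mul_pid_mx pid_mx_minv (minn_idPl _) //.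
  by rewrite -ltnS prednK // (leq_ltn_trans (leq0n k) k_lt_s).
rewrite time_basisE raddfD /= !trmx_mul trmxK tr_pid_mx mulmxDl !mulmxDr !mulmxA.
rewrite -(mulmxA C (pid_mx 1) (pid_mx 1)) pid_mx_idem.
rewrite -(mulmxA C (pid_mx 1) (shift_mx s)^T) P1ShT mulmx0 mul0mx addr0.
rewrite -(mulmxA _ (shift_mx s) (pid_mx 1)) shift_mx_pid1 mulmx0 mul0mx add0r.
by rewrite -(mulmxA H) -(mulmxA H) PkShShT.
Qed.

End TimeBasis.

Lemma zero_firstE (R : realType) q s (X : 'M[R]_(q, s)) :
  zero_first X = X - X *m pid_mx 1.
Proof.
apply/matrixP => i j; rewrite mxE [RHS]mxE [X in _ + X]mxE mul_mx_pidE ltnS leqn0.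
by case: (_ == _); rewrite ?subrr ?subr0.
Qed.

Section Truncation.
Variables (R : realType) (q s : nat) (LY : 'M[R]_q) (LS : 'M[R]_s).
Hypotheses (LY_unit : LY \in unitmx) (LS_unit : LS \in unitmx).

Lemma mulmx_whiten m (A : 'M[R]_(q, m)) (C : 'M[R]_(m, s)) (B : 'M[R]_s) :
  LY^T *m (A *m C *m B^T) *m LS = LY^T *m A *m C *m (B^T *m LS).
Proof. by rewrite !mulmxA. Qed.

Lemma space_coef_whiten W : LY^T *m space_coef LY W = W.
Proof. by rewrite /space_coef mulmxA -trmx_mul mulVmx // trmx1 mul1mx. Qed.

Lemma time_coef_whiten U : (time_coef LS U)^T *m LS = U^T.
Proof. by rewrite /time_coef trmx_mul trmxK -mulmxA mulVmx // mulmx1. Qed.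

Lemma space_truncation_err (B : 'M[R]_s) qh sh W sig V X :
  is_svd (LY^T *m X *m LS) W sig V -> span_prod 1%:M B q sh X ->
  exists2 Y, span_prod (space_coef LY W) B qh sh Y
           & sy_inner LY LS (X - Y) (X - Y) = tail_sq sig qh q.
Proof.
move=> svdX /span_prodP[C]; rewrite pid_mx_1 !mul1mx => defX.
exists (space_coef LY W *m (pid_mx qh *m (W^T *m LY^T *m C) *m pid_mx sh) *m B^T).
  by apply/span_prodP; eexists.
rewrite sy_inner_self -(svd_tail_left qh svdX) mulmxBr mulmxBl.
congr (frob2 (_ - _)).
by rewrite mulmx_whiten space_coef_whiten defX mulmx_whiten !mulmxA.
Qed.

Lemma time_truncation_err (A : 'M[R]_q) qh sh U sig V X :
  (0 < sh <= s)%N ->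
  is_svd (LY^T *m zero_first X *m LS) U sig V -> span_prod A 1%:M qh s X ->
  exists2 Y, span_prod A (time_coef LS (time_basis LS V)) qh sh Y
           & sy_inner LY LS (X - Y) (X - Y) = tail_sq sig sh.-1 s.
Proof.
move=> /andP[sh_gt0 sh_le_s] svdX /span_prodP[C].
rewrite pid_mx_1 trmx1 !mulmx1.
have : pid_mx qh *m ((pid_mx qh : 'M_q) *m C) = pid_mx qh *m C :> 'M[R]_(q, s).
  by rewrite mulmxA pid_mx_idem.
move: (pid_mx qh *m C) => C0 C0_rows defX.
set k := sh.-1.
have k_lt_s : (k < s)%N by rewrite /k prednK.
have ShP : shift_mx s *m pid_mx sh = pid_mx k *m shift_mx s :> 'M[R]_s.
  by rewrite -shift_mx_pid prednK.
set N := (C0 - C0 *m pid_mx 1) *m LS *m V.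
(* Coefficients in the reduced time basis: column 0 keeps the initial-value column
   of [C0], the shift moves the rank-[k] right truncation into columns 1..k. *)
set D := C0 *m pid_mx 1 + N *m pid_mx k *m shift_mx s.
have D_supp : pid_mx qh *m D *m pid_mx sh = D.
  rewrite /D /N mulmxDr !mulmxA mulmxBr !mulmxA C0_rows mulmxDl.
  rewrite -(mulmxA _ (pid_mx 1) (pid_mx sh)) mul_pid_mx pid_mx_minv (minn_idPl sh_gt0).
  rewrite -(mulmxA _ (shift_mx s)) ShP !mulmxA.
  by rewrite -(mulmxA _ (pid_mx k) (pid_mx k)) pid_mx_idem.
exists (A *m D *m (time_coef LS (time_basis LS V))^T).
  by apply/span_prodP; exists D; rewrite D_supp.
rewrite sy_inner_self -(svd_tail_right k svdX) mulmxBr mulmxBl mulmx_whiten.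
rewrite time_coef_whiten -(mulmxA _ D) /D time_basis_coef // zero_firstE defX /N.
by congr frob2; rewrite mulmxDr opprD addrA !mulmxBr !mulmxBl !mulmxA mulmxBr !mulmxA.
Qed.

End Truncation.

Theorem proposition2 (R : realType) (q s qh sh : nat)
  (LS : 'M[R]_s) (LY : 'M[R]_q) (c0 : 'cV[R]_q) (X : 'M[R]_(q, s)) :
  LS \in unitmx ->
  (forall i j : 'I_s, (nat_of_ord j < nat_of_ord i)%N -> LS i j = 0) ->
  LY \in unitmx ->
  (1 <= qh <= q)%N -> (2 <= sh <= s)%N ->
  (* x in \mathscr S . Y : x(0) = Pi_Y x0, c0 = coefficients of Pi_Y x0 *)
  (forall (i : 'I_q) (j : 'I_s), (nat_of_ord j == 0)%N -> X i j = c0 i 0) ->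
  (* case P = P_{Y^ -> S^} *)
  (forall (Wl : 'M[R]_q) (sig : nat -> R) (Wr : 'M[R]_s)
          (X1 : 'M[R]_(q, s))
          (Ul : 'M[R]_q) (sigr : nat -> R) (Ur : 'M[R]_s)
          (P : 'M[R]_(q, s)),
     is_svd (LY^T *m X *m LS) Wl sig Wr ->
     is_orth_proj LY LS (span_prod (space_coef LY Wl) 1%:M qh s) X X1 ->
     is_svd (LY^T *m zero_first X1 *m LS) Ul sigr Ur ->
     is_orth_proj LY LS
       (span_prod (space_coef LY Wl) (time_coef LS (time_basis LS Ur)) qh sh)
       X1 P ->
     sy_norm LY LS (X - P)
       <= Num.sqrt (tail_sq sig qh q) + Num.sqrt (tail_sq sigr sh.-1 s))
  /\
  (* case P = P_{S^ -> Y^} *)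
  (forall (Ul : 'M[R]_q) (sigr : nat -> R) (Ur : 'M[R]_s)
          (X2 : 'M[R]_(q, s))
          (Wl : 'M[R]_q) (sig : nat -> R) (Wr : 'M[R]_s)
          (P : 'M[R]_(q, s)),
     is_svd (LY^T *m zero_first X *m LS) Ul sigr Ur ->
     is_orth_proj LY LS (span_prod 1%:M (time_coef LS (time_basis LS Ur)) q sh) X X2 ->
     is_svd (LY^T *m X2 *m LS) Wl sig Wr ->
     is_orth_proj LY LS
       (span_prod (space_coef LY Wl) (time_coef LS (time_basis LS Ur)) qh sh)
       X2 P ->
     sy_norm LY LS (X - P)
       <= Num.sqrt (tail_sq sigr sh.-1 s) + Num.sqrt (tail_sq sig qh q)).
Proof.
move=> LS_unit _ LY_unit _ /andP[sh_ge2 sh_le_s] _.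
have sh_range : (0 < sh <= s)%N by rewrite sh_le_s (leq_trans _ sh_ge2).
split=> [Wl sig Wr X1 Ul sigr Ur P svdX projX svdX1 projX1
        |Ul sigr Ur X2 Wl sig Wr P svdX projX svdX2 projX2].
- apply: (two_step_orth_proj_err_le _ _ _ projX projX1).
  + exact: span_prodB.
  + exact: span_prodB.
  + exact: span_prod_widen_time.
  + apply: (space_truncation_err LY_unit qh svdX); exact: span_prod_full.
  + apply: (time_truncation_err LS_unit sh_range svdX1); exact: proj1 projX.
- apply: (two_step_orth_proj_err_le _ _ _ projX projX2).
  + exact: span_prodB.
  + exact: span_prodB.
  + exact: span_prod_widen_space.
  + apply: (time_truncation_err LS_unit sh_range svdX); exact: span_prod_full.
  + apply: (space_truncation_err LY_unit qh svdX2); exact: proj1 projX.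
Qed.
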